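(* Let $\lambda_y>0$ be fixed and let $\mathcal{C}\subseteq(0,\infty)$ be a convex set. For $\lambda_x\in\mathcal{C}$ define $\alpha(\lambda_x,\lambda_y)=\frac{\lambda_x}{\lambda_y}\left(1-e^{-\lambda_y}\right)$ and $\bar{p}_{\lambda_y}(\lambda_x)=1-\frac{1}{1+\alpha(\lambda_x,\lambda_y)}$. Let $U(a,b)$ be a real-valued function that is jointly concave in $(a,b)$ and nondecreasing in $a$ for every fixed $b$. Then the objective function $\lambda_x\mapsto U\big(\bar{p}_{\lambda_y}(\lambda_x),\lambda_x\big)$ of the optimization problem $\max_{\lambda_x\in\mathcal{C}} U\big(\bar{p}_{\lambda_y}(\lambda_x),\lambda_x\big)$ is concave in $\lambda_x$ on $\mathcal{C}$.
   Context: Here $\lambda_x$ is the Poisson arrival rate of ''fishing tasks'' and $\lambda_y$ the Poisson arrival rate of regular tasks; the optimization problem above is called OP1 in the paper, and the lemma asserts that OP1 is a concave maximization problem in $\lambda_x$. *)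

From Stdlib Require Import Reals.
Open Scope R_scope.

Definition convex_set (C : R -> Prop) : Prop :=
  forall x y t, C x -> C y -> 0 <= t <= 1 -> C (t * x + (1 - t) * y).

Definition concave_on (C : R -> Prop) (f : R -> R) : Prop :=
  forall x y t, C x -> C y -> 0 <= t <= 1 ->
    t * f x + (1 - t) * f y <= f (t * x + (1 - t) * y).

Definition jointly_concave (U : R -> R -> R) : Prop :=
  forall a1 b1 a2 b2 t, 0 <= t <= 1 ->
    t * U a1 b1 + (1 - t) * U a2 b2
      <= U (t * a1 + (1 - t) * a2) (t * b1 + (1 - t) * b2).

Definition nondecreasing_first (U : R -> R -> R) : Prop :=
  forall a a' b, a <= a' -> U a b <= U a' b.

Definition alpha (lx ly : R) : R := lx / ly * (1 - exp (- ly)).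

Definition pbar (ly lx : R) : R := 1 - 1 / (1 + alpha lx ly).

(* [pbar ly lx = 1 - 1 / (1 + k lx)], with
   [k = (1 - exp (- ly)) / ly > 0], is concave in [lx] because [z |-> 1 / z] is
   convex on the positive reals and [1 + k lx] is affine in [lx].  Composing
   the concave map [lx |-> (pbar ly lx, lx)] with a jointly concave [U] that is
   nondecreasing in its first argument preserves concavity. *)

From Stdlib Require Import Reals Lra Psatz.
Open Scope R_scope.

Lemma Rinv_convex (a b t : R) : 0 < a -> 0 < b -> 0 <= t <= 1 ->
  / (t * a + (1 - t) * b) <= t / a + (1 - t) / b.
Proof.
  intros Ha Hb Ht.
  assert (Hm : 0 < t * a + (1 - t) * b) by nra.
  assert (Hgap : t / a + (1 - t) / b - / (t * a + (1 - t) * b)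
                 = t * (1 - t) * (a - b) ^ 2 / (a * b * (t * a + (1 - t) * b))).
  { field; lra. }
  assert (0 <= t * (1 - t) * (a - b) ^ 2 / (a * b * (t * a + (1 - t) * b))).
  { apply Rmult_le_pos.
    - apply Rmult_le_pos; [nra | apply pow2_ge_0].
    - apply Rlt_le, Rinv_0_lt_compat, Rmult_lt_0_compat; [nra | exact Hm]. }
  lra.
Qed.

Lemma concave_on_subset (C D : R -> Prop) (f : R -> R) :
  (forall x, C x -> D x) -> concave_on D f -> concave_on C f.
Proof. intros HCD Hf x y t Cx Cy Ht; apply Hf; auto. Qed.

Lemma concave_on_comp_nondecreasing (C : R -> Prop) (U : R -> R -> R) (p : R -> R) :
  jointly_concave U -> nondecreasing_first U -> concave_on C p ->
  concave_on C (fun x => U (p x) x).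
Proof.
  intros HU Hmono Hp x y t Cx Cy Ht.
  apply Rle_trans with (U (t * p x + (1 - t) * p y) (t * x + (1 - t) * y)).
  - apply HU; exact Ht.
  - apply Hmono, Hp; assumption.
Qed.

Lemma saturation_concave (k : R) : 0 <= k ->
  concave_on (fun x => 0 < x) (fun x => 1 - 1 / (1 + k * x)).
Proof.
  intros Hk x y t Hx Hy Ht.
  replace (1 + k * (t * x + (1 - t) * y))
    with (t * (1 + k * x) + (1 - t) * (1 + k * y)) by ring.
  pose proof (Rinv_convex (1 + k * x) (1 + k * y) t ltac:(nra) ltac:(nra) Ht).
  unfold Rdiv in *; lra.
Qed.

Lemma one_minus_exp_neg_pos (x : R) : 0 < x -> 0 < 1 - exp (- x).
Proof.
  intros Hx.
  assert (exp (- x) < exp 0) by (apply exp_increasing; lra).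
  rewrite exp_0 in *; lra.
Qed.

Lemma pbar_saturation (ly lx : R) :
  pbar ly lx = 1 - 1 / (1 + (1 - exp (- ly)) / ly * lx).
Proof. unfold pbar, alpha, Rdiv; f_equal; f_equal; f_equal; ring. Qed.

Lemma pbar_concave (ly : R) : 0 < ly -> concave_on (fun x => 0 < x) (pbar ly).
Proof.
  intros Hly x y t Hx Hy Ht; rewrite !pbar_saturation.
  apply saturation_concave; try assumption.
  apply Rlt_le, Rdiv_lt_0_compat; [apply one_minus_exp_neg_pos|]; exact Hly.
Qed.

Theorem lemma1 (ly : R) (C : R -> Prop) (U : R -> R -> R) :
  0 < ly ->
  (forall x, C x -> 0 < x) ->
  convex_set C ->
  jointly_concave U ->
  nondecreasing_first U ->
  concave_on C (fun lx => U (pbar ly lx) lx).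
Proof.
  intros Hly Hpos _ HU Hmono.
  apply concave_on_comp_nondecreasing; [exact HU | exact Hmono |].
  exact (concave_on_subset C _ _ Hpos (pbar_concave ly Hly)).
Qed.
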